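(* Let $\gamma=(1+\sqrt5)/2$ and let $(\mathbf{w}_i)_{i\ge0}$ be a Fibonacci sequence in $\mathrm{GL}_2(\mathbb{R})$ (i.e. $\mathbf{w}_{i+2}=\mathbf{w}_{i+1}\mathbf{w}_i$). Suppose there are real $c_1,c_2>0$ with $c_1\|\mathbf{w}_i\|\|\mathbf{w}_{i+1}\|\le\|\mathbf{w}_{i+2}\|\le c_2\|\mathbf{w}_i\|\|\mathbf{w}_{i+1}\|$ for all $i\ge0$. Then there are constants $c_3,c_4>0$ such that for all $i\ge0$, $c_3\|\mathbf{w}_i\|^\gamma\le\|\mathbf{w}_{i+1}\|\le c_4\|\mathbf{w}_i\|^\gamma$ and $c_3|\det(\mathbf{w}_i)|^\gamma\le|\det(\mathbf{w}_{i+1})|\le c_4|\det(\mathbf{w}_i)|^\gamma$. Moreover, if $\alpha,\beta\ge0$ are such that $(c_2\|\mathbf{w}_i\|)^\alpha\le|\det(\mathbf{w}_i)|\le(c_1\|\mathbf{w}_i\|)^\beta$ holds for $i=0$ and $i=1$, then it holds for every $i\ge0$.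
   Context: For a $2\times2$ real matrix $\mathbf{w}$, $\|\mathbf{w}\|$ denotes the largest absolute value of its coefficients. *)

From HB Require Import structures.
From mathcomp Require Import all_boot all_order all_algebra.
From mathcomp Require Import all_classical all_reals all_analysis.
Set Implicit Arguments. Unset Strict Implicit. Unset Printing Implicit Defensive.
Import Order.TTheory GRing.Theory Num.Theory.
Local Open Scope ring_scope.

Definition mxnorm2 (R : realType) (w : 'M[R]_2) : R :=
  \big[Num.max/0]_(ij : 'I_2 * 'I_2) `|w ij.1 ij.2|.

Definition golden (R : realType) : R := (1 + Num.sqrt 5) / 2.

From HB Require Import structures.
From mathcomp Require Import all_boot all_order all_algebra.
From mathcomp Require Import all_classical all_reals all_analysis.
From mathcomp Require Import ring lra.
Import Order.TTheory GRing.Theory Num.Theory.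
Local Open Scope ring_scope.

(* Put a_i = ln ||w_i||. The norm hypothesis says a_{i+2} = a_i + a_{i+1} + O(1).
   Since gamma (gamma - 1) = 1, the defect b_i = a_{i+1} - gamma a_i obeys
   b_{i+1} = O(1) - (gamma - 1) b_i, and 0 < gamma - 1 < 1 makes this recursion
   contracting, so b is bounded; exponentiating gives ||w_{i+1}|| ~ ||w_i||^gamma.
   Determinants are the exact case, |det w_{i+2}| = |det w_i| |det w_{i+1}|.
   The alpha/beta bounds propagate by induction: multiply the bounds for w_i and
   w_{i+1} and compare c1 ||w_i|| ||w_{i+1}|| and c2 ||w_i|| ||w_{i+1}|| with ||w_{i+2}||. *)

Section GoldenGrowth.
Context {R : realType}.

Lemma golden_bounds : 1 < golden R < 2.
Proof.
have s0 : 0 <= Num.sqrt (5 : R) := sqrtr_ge0 _.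
have s2 : Num.sqrt (5 : R) * Num.sqrt 5 = 5 by rewrite -expr2 sqr_sqrtr.
by rewrite /golden; apply/andP; split; nra.
Qed.

Lemma golden_mul_subr1 : golden R * (golden R - 1) = 1.
Proof.
have s2 : Num.sqrt (5 : R) * Num.sqrt 5 = 5 by rewrite -expr2 sqr_sqrtr.
rewrite /golden; nra.
Qed.

Lemma almost_fibonacci_golden (a e : nat -> R) (E : R) :
  (forall i, `|e i| <= E) -> (forall i, a i.+2 = a i + a i.+1 + e i) ->
  exists B, forall i, `|a i.+1 - golden R * a i| <= B.
Proof.
move=> eE ae; have /andP[g1 g2] := golden_bounds; have gg := golden_mul_subr1.
set g := golden R in g1 g2 gg *.
pose b i := a i.+1 - g * a i.
have b_rec i : b i.+1 = e i - (g - 1) * b i.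
  apply/eqP; rewrite /b ae -subr_eq0; apply/eqP.
  by transitivity ((1 - g * (g - 1)) * a i); [ring | rewrite gg subrr mul0r].
have E0 : 0 <= E := le_trans (normr_ge0 _) (eE 0%N).
exists (`|b 0%N| + E / (2 - g)); elim=> [|i IH].
  by rewrite -/(b 0%N) lerDl divr_ge0 // subr_ge0 ltW.
rewrite -/(b i.+1) b_rec.
have norm_step : `|e i - (g - 1) * b i| <= E + (g - 1) * `|b i|.
  have g1_ge0 : 0 <= g - 1 by lra.
  apply: le_trans (ler_normB _ _) _.
  by rewrite normrM (ger0_norm g1_ge0) lerD2r.
have fixpoint : E + (g - 1) * (E / (2 - g)) = E / (2 - g) by field; lra.
have := normr_ge0 (b 0%N); have : 0 <= E / (2 - g) by apply: divr_ge0; lra.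
nra.
Qed.

Lemma powR_sandwich_of_ln (x y g B : R) : 0 < x -> 0 < y ->
  `|ln y - g * ln x| <= B -> expR (- B) * x `^ g <= y <= expR B * x `^ g.
Proof.
move=> x0 y0; rewrite ler_norml => /andP[lo hi].
rewrite /powR (gt_eqF x0) -!expRD -[y]lnK ?posrE // !ler_expR.
by apply/andP; split; lra.
Qed.

Lemma widen_sandwich (a b a' b' p y : R) : 0 <= p -> a' <= a -> b <= b' ->
  a * p <= y <= b * p -> a' * p <= y <= b' * p.
Proof.
move=> p0 aa bb /andP[lo hi]; apply/andP; split.
  exact: le_trans (ler_wpM2r p0 aa) lo.
exact: le_trans hi (ler_wpM2r p0 bb).
Qed.

Lemma almost_fibonacci_mul_golden (x : nat -> R) (c1 c2 : R) :
  0 < c1 -> 0 < c2 -> (forall i, 0 < x i) ->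
  (forall i, c1 * x i * x i.+1 <= x i.+2 <= c2 * x i * x i.+1) ->
  exists c3 c4, 0 < c3 /\ 0 < c4 /\
    forall i, c3 * x i `^ golden R <= x i.+1 <= c4 * x i `^ golden R.
Proof.
move=> c10 c20 x0 hx.
pose e i := ln (x i.+2) - ln (x i) - ln (x i.+1).
have ln_prod c i : 0 < c -> ln (c * x i * x i.+1) = ln c + ln (x i) + ln (x i.+1).
  by move=> c0; rewrite !lnM ?posrE ?mulr_gt0.
have e_bound i : `|e i| <= `|ln c1| + `|ln c2|.
  have /andP[lo hi] := hx i.
  rewrite -ler_ln ?posrE ?mulr_gt0 // ln_prod // in lo.
  rewrite -ler_ln ?posrE ?mulr_gt0 // ln_prod // in hi.
  have := ler_norm (ln c2); have := ler_norm (- ln c1); rewrite normrN.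
  have := normr_ge0 (ln c1); have := normr_ge0 (ln c2).
  rewrite /e ler_norml; lra.
have ln_rec i : ln (x i.+2) = ln (x i) + ln (x i.+1) + e i by rewrite /e; ring.
have [B hB] := almost_fibonacci_golden (fun i => ln (x i)) e _ e_bound ln_rec.
exists (expR (- B)), (expR B); split; first exact: expR_gt0.
split; first exact: expR_gt0.
by move=> i; apply: powR_sandwich_of_ln.
Qed.

End GoldenGrowth.

Section DetNormSandwich.
Context {R : realType}.
Variables (c1 c2 alpha beta : R).
Hypotheses (c1_gt0 : 0 < c1) (c2_gt0 : 0 < c2).
Hypotheses (alpha_ge0 : 0 <= alpha) (beta_ge0 : 0 <= beta).

Definition sandwiched (n d : R) := (c2 * n) `^ alpha <= d <= (c1 * n) `^ beta.

Lemma sandwiched_mul (a b n d d' : R) : 0 <= a -> 0 <= b ->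
  c1 * a * b <= n <= c2 * a * b ->
  sandwiched a d -> sandwiched b d' -> sandwiched n (d * d').
Proof.
rewrite /sandwiched => a0 b0 /andP[n_lo n_hi] /andP[d_lo d_hi] /andP[d'_lo d'_hi].
have c1_ge0 := ltW c1_gt0; have c2_ge0 := ltW c2_gt0.
have n0 : 0 <= n by apply: le_trans n_lo; rewrite !mulr_ge0.
apply/andP; split.
  apply: le_trans (ler_pM (powR_ge0 _ _) (powR_ge0 _ _) d_lo d'_lo).
  rewrite -powRM ?mulr_ge0 //; apply: ge0_ler_powR; rewrite ?nnegrE ?mulr_ge0 //.
  by rewrite mulrACA -mulrA ler_wpM2l // mulrA.
have d0 : 0 <= d := le_trans (powR_ge0 _ _) d_lo.
have d'0 : 0 <= d' := le_trans (powR_ge0 _ _) d'_lo.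
apply: le_trans (ler_pM d0 d'0 d_hi d'_hi) _.
rewrite -powRM ?mulr_ge0 //; apply: ge0_ler_powR; rewrite ?nnegrE ?mulr_ge0 //.
by rewrite mulrACA -mulrA ler_wpM2l // mulrA.
Qed.

Lemma sandwiched_fibonacci (n d : nat -> R) :
  (forall i, 0 <= n i) -> (forall i, d i.+2 = d i * d i.+1) ->
  (forall i, c1 * n i * n i.+1 <= n i.+2 <= c2 * n i * n i.+1) ->
  sandwiched (n 0%N) (d 0%N) -> sandwiched (n 1%N) (d 1%N) ->
  forall i, sandwiched (n i) (d i).
Proof.
move=> n0 d_rec hn s0 s1.
suff step i : sandwiched (n i) (d i) /\ sandwiched (n i.+1) (d i.+1).
  by move=> i; case: (step i).
elim: i => [|i [si si1]]; first by [].
by split; rewrite // d_rec; apply: sandwiched_mul.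
Qed.

End DetNormSandwich.

Lemma mxnorm2_ge {R : realType} (w : 'M[R]_2) i j : `|w i j| <= mxnorm2 w.
Proof. exact: (le_bigmax _ (fun ij : 'I_2 * 'I_2 => `|w ij.1 ij.2|) (i, j)). Qed.

Lemma mxnorm2_gt0 {R : realType} (w : 'M[R]_2) : w != 0 -> 0 < mxnorm2 w.
Proof.
apply: contraNT; rewrite -leNgt => w_le0; apply/eqP/matrixP => i j.
by apply/eqP; rewrite mxE -normr_le0 (le_trans (mxnorm2_ge w i j)).
Qed.

Lemma unitmx_neq0 {R : realType} n (w : 'M[R]_n.+1) : w \in unitmx -> w != 0.
Proof. by apply: contraTneq => ->; rewrite unitmxE det0 unitr0. Qed.

Lemma normr_det_gt0 {R : realType} n (w : 'M[R]_n) : w \in unitmx -> 0 < `|\det w|.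
Proof. by rewrite unitmxE unitfE normr_gt0. Qed.

Theorem proposition5p3 (R : realType) (w : nat -> 'M[R]_2) (c1 c2 : R) :
  (forall i, w i \in unitmx) ->
  (forall i, w i.+2 = w i.+1 *m w i) ->
  0 < c1 -> 0 < c2 ->
  (forall i, c1 * mxnorm2 (w i) * mxnorm2 (w i.+1) <= mxnorm2 (w i.+2)
             <= c2 * mxnorm2 (w i) * mxnorm2 (w i.+1)) ->
  (exists c3 c4 : R, 0 < c3 /\ 0 < c4 /\
     forall i,
       (c3 * mxnorm2 (w i) `^ golden R <= mxnorm2 (w i.+1)
          <= c4 * mxnorm2 (w i) `^ golden R) /\
       (c3 * `|\det (w i)| `^ golden R <= `|\det (w i.+1)|
          <= c4 * `|\det (w i)| `^ golden R)) /\
  (forall alpha beta : R, 0 <= alpha -> 0 <= beta ->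
     (forall i, (i <= 1)%N ->
        (c2 * mxnorm2 (w i)) `^ alpha <= `|\det (w i)| <= (c1 * mxnorm2 (w i)) `^ beta) ->
     forall i,
        (c2 * mxnorm2 (w i)) `^ alpha <= `|\det (w i)| <= (c1 * mxnorm2 (w i)) `^ beta).
Proof.
move=> w_unit w_rec c1_gt0 c2_gt0 hN.
have N_gt0 i : 0 < mxnorm2 (w i) by apply/mxnorm2_gt0/unitmx_neq0.
have D_gt0 i : 0 < `|\det (w i)| by apply: normr_det_gt0.
have D_rec i : `|\det (w i.+2)| = `|\det (w i)| * `|\det (w i.+1)|.
  by rewrite w_rec det_mulmx normrM mulrC.
have D_exact i : 1 * `|\det (w i)| * `|\det (w i.+1)| <= `|\det (w i.+2)|
                   <= 1 * `|\det (w i)| * `|\det (w i.+1)|.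
  by rewrite !mul1r D_rec lexx.
split.
  have [c3 [c4 [c3_gt0 [c4_gt0 hNg]]]] :=
    almost_fibonacci_mul_golden _ _ _ c1_gt0 c2_gt0 N_gt0 hN.
  have [c3' [c4' [c3'_gt0 [c4'_gt0 hDg]]]] :=
    almost_fibonacci_mul_golden _ _ _ ltr01 ltr01 D_gt0 D_exact.
  exists (Num.min c3 c3'), (Num.max c4 c4').
  split; first by rewrite lt_min c3_gt0.
  split; first by rewrite lt_max c4_gt0.
  move=> i; split.
    by apply: widen_sandwich (hNg i); rewrite ?powR_ge0 ?ge_min ?le_max ?lexx.
  by apply: widen_sandwich (hDg i); rewrite ?powR_ge0 ?ge_min ?le_max ?lexx ?orbT.
move=> alpha beta alpha_ge0 beta_ge0 h01.
apply: (sandwiched_fibonacci _ _ _ _ c1_gt0 c2_gt0 alpha_ge0 beta_ge0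
  (fun i => mxnorm2 (w i)) (fun i => `|\det (w i)|) (fun i => ltW (N_gt0 i)) D_rec hN);
  exact: h01.
Qed.
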